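(* Let $m\in\mathbb{N}$ be odd and divisible by $3$. Then the friendship graph $F_j$ is $\mathbb{Z}_m$-cordial for every integer $j$ with $\frac{2m}{3}\le j\le m$.
   Context: Graphs are finite, simple and undirected. For $n\in\mathbb{N}$, the friendship graph $F_n$ is the union of $n$ copies of the triangle $C_3$ joined at a single common (central) vertex. For an abelian group $A$ and a graph $G=(V,E)$, a vertex labeling $\ell:V\to A$ induces an edge labeling $\ell(\{v_1,v_2\})=\ell(v_1)+\ell(v_2)$. Let $f_V(a)=|\{v\in V:\ell(v)=a\}|$ and $f_E(a)=|\{e\in E:\ell(e)=a\}|$. The labeling is $A$-cordial if $|f_V(a_1)-f_V(a_2)|\le 1$ and $|f_E(a_1)-f_E(a_2)|\le 1$ for all $a_1,a_2\in A$; $G$ is $A$-cordial if it admits an $A$-cordial labeling. *)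

From mathcomp Require Import all_boot all_order all_algebra.
Set Implicit Arguments. Unset Strict Implicit. Unset Printing Implicit Defensive.

Definition simple_graph (V : finType) (adj : rel V) : Prop :=
  symmetric adj /\ irreflexive adj.

Definition edges (V : finType) (adj : rel V) : {set {set V}} :=
  [set E : {set V} | [exists u, exists v, adj u v && (E == [set u; v])]].

(* Friendship graph F_n: vertices 0..2n, vertex 0 central, triangles
   {0, 2i+1, 2i+2} for i < n. *)
Definition friendship_adj (n : nat) : rel 'I_(2 * n).+1 :=
  fun u v => (u != v) &&
    [|| (nat_of_ord u == 0%N), (nat_of_ord v == 0%N) |
        ((0 < u)%N && (0 < v)%N && ((u.-1)./2 == (v.-1)./2))].

Section Cordial.
Variables (A : finZmodType) (V : finType) (adj : rel V).

Definition vcount (l : V -> A) (a : A) : nat := #|[set v | l v == a]|.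

Definition edge_label (l : V -> A) (e : {set V}) (a : A) : bool :=
  [exists u, exists v, (e == [set u; v]) && (u != v) && ((l u + l v)%R == a)].

Definition ecount (l : V -> A) (a : A) : nat :=
  #|[set e in edges adj | edge_label l e a]|.

Definition cordial_labeling (l : V -> A) : Prop :=
  forall a1 a2 : A,
    (vcount l a1 <= (vcount l a2).+1)%N /\ (ecount l a1 <= (ecount l a2).+1)%N.

Definition cordial : Prop := exists l : V -> A, cordial_labeling l.
End Cordial.

From mathcomp Require Import all_boot all_order all_algebra.
From mathcomp Require Import zify.

(* Write m = 3k (k odd) and j = m - t with 0 <= t <= k.  Label the centre 0
   and give one triangle to each x of S = {0, ..., m-1} \ {1, 4, ..., 3t-2},
   with outer labels (x, x+1), except that the triangle of m-1 becomes
   (m-1, 1) when t > 0 and that of 0 becomes (m-1, 1) when t = k.  Away from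
   b = 0, 1, m-1 the label b then occurs [b in S] + [b-1 in S] times on
   vertices and additionally [w in S] times on edges, where 2w+1 = b in Z_m
   (m is odd).  As 3 | m we have b = 2w+1 (mod 3), so at most one of b, b-1,
   w is 1 (mod 3), i.e. at most one of them is missing from S: vertex counts
   lie in {1, 2} ({2, 3} if t = 0) and edge counts in {2, 3}.  The exceptional
   triangles repair the counts at b = 0, 1 and m-1. *)

Import GRing.Theory.

Lemma card_ord_count N (P : pred nat) : #|[set x : 'I_N | P x]| = count P (iota 0 N).
Proof.
by rewrite -sum1dep_card -(big_mkord P (fun=> 1)) sum1_count /index_iota subn0.
Qed.

Lemma sum_ord_count N (P : pred nat) : \sum_(i < N) (P i : nat) = count P (iota 0 N).
Proof.
have -> : iota 0 N = index_iota 0 N by rewrite /index_iota subn0.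
rewrite -sum1_count big_mkord [RHS]big_mkcond.
by apply: eq_bigr => i _; case: (P i).
Qed.

Lemma card_ord_pairs N (Q : nat -> pred nat) :
  #|[set p : 'I_N * 'I_N | Q p.1 p.2]| = \sum_(u < N) count (Q u) (iota 0 N).
Proof.
rewrite -sum1dep_card -(pair_big_dep xpredT (fun u v : 'I_N => Q u v) (fun _ _ => 1)).
by apply: eq_bigr => u _; rewrite sum1dep_card card_ord_count.
Qed.

Lemma count_iota_pred1 a N u (c : bool) :
  count (fun x => (x == u) && c) (iota a N) = (a <= u < a + N) && c.
Proof.
case: c; last by rewrite andbF; elim: (iota a N) => //= x s ->; rewrite andbF.
rewrite andbT -mem_iota -count_uniq_mem ?iota_uniq //.
by apply: eq_count => x; rewrite andbT.
Qed.

Lemma iota0S n : iota 0 n.+1 = 0 :: map succn (iota 0 n).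
Proof.
by rewrite /= -[1]/(1 + 0) iotaDl; congr (_ :: _); apply: eq_map => x; rewrite add1n.
Qed.

Lemma count_iota2 n (P : pred nat) :
  count P (iota 0 n.+2) = P 0 + P 1 + count (fun u => P u.+2) (iota 0 n).
Proof. by rewrite !iota0S /= !count_map addnA. Qed.

Lemma count_iota_ends N (P : pred nat) :
  1 < N -> count P (iota 0 N) = P 0 + count P (iota 1 (N - 2)) + P N.-1.
Proof.
move=> ltN; rewrite -(subnKC ltN) addKn add2n; set n := N - 2.
by rewrite [n.+2.-1]/= -(addn1 n.+1) iotaD count_cat /= add0n addn0.
Qed.

Lemma double_succ_surjective m n : odd m -> n < m ->
  exists2 w, w < m & (2 * w + 1 = n \/ 2 * w + 1 = n + m).
Proof.
move=> odd_m ltnm; have := odd_double_half m; have := odd_double_half n.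
rewrite odd_m -!muln2; case: (odd n) => /= hn hm.
  by exists n./2; lia.
by exists (n./2 + m./2); lia.
Qed.

Lemma modn_double_succ m x w n : odd m -> x < m -> w < m -> n < m ->
  (2 * w + 1 = n \/ 2 * w + 1 = n + m) -> ((2 * x + 1) %% m == n) = (x == w).
Proof.
move=> odd_m ltxm ltwm ltnm hw; have := odd_double_half m; rewrite odd_m -muln2 => hm.
have [lt2x | le2x] := ltnP (2 * x + 1) m.
  by rewrite modn_small //; apply/idP/idP; lia.
rewrite -[2 * x + 1](subnK le2x) modnDr modn_small; last by lia.
by apply/idP/idP; lia.
Qed.

Section ZpValues.
Variable p : nat.
Hypothesis p_gt1 : 1 < p.

Lemma Zp_val_lt (b : 'Z_p) : b < p.
Proof. by rewrite -[X in _ < X](Zp_cast p_gt1). Qed.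

Lemma inZp_eq a (b : 'Z_p) : a < p -> (inZp a == b) = (a == b).
Proof. by move=> ltap; rewrite -val_eqE /= modn_small ?(Zp_cast p_gt1). Qed.

Lemma inZpD_eq a c (b : 'Z_p) : (inZp a + inZp c == b)%R = ((a + c) %% p == b).
Proof. by rewrite -val_eqE /= modnDm [in _ %% _](Zp_cast p_gt1). Qed.

End ZpValues.

Lemma set2_eqP (T : finType) (x y u v : T) :
  [set x; y] = [set u; v] -> (x = u /\ y = v) \/ (x = v /\ y = u).
Proof.
move=> e.
have /set2P hx : x \in [set u; v] by rewrite -e set21.
have /set2P hy : y \in [set u; v] by rewrite -e set22.
have /set2P hu : u \in [set x; y] by rewrite e set21.
have /set2P hv : v \in [set x; y] by rewrite e set22.
by case: hx hy hu hv => -> [] -> [] ? [] ?; subst; auto.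
Qed.

Lemma set2_ltn_inj n (u v u' v' : 'I_n) : u < v -> u' < v' ->
  [set u; v] = [set u'; v'] -> (u, v) = (u', v').
Proof.
move=> ltuv ltuv' /set2_eqP [[-> ->] | [eu ev]] //.
by move: ltuv'; rewrite -eu -ev ltnNge ltnW.
Qed.

Lemma cordial_of_count_bounds (A : finZmodType) (V : finType) (adj : rel V)
    (l : V -> A) (nv ne : nat) :
  (forall a, nv <= vcount l a <= nv.+1) -> (forall a, ne <= ecount adj l a <= ne.+1) ->
  cordial A adj.
Proof.
move=> hv he; exists l => a1 a2; split.
- by case/andP: (hv a1) => _ /leq_trans->; case/andP: (hv a2).
- by case/andP: (he a1) => _ /leq_trans->; case/andP: (he a2).
Qed.

Section SimpleGraph.
Context {A : finZmodType} {V : finType} (adj : rel V).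
Hypothesis adj_simple : simple_graph adj.

Lemma set2_in_edges u v : ([set u; v] \in edges adj) = adj u v.
Proof.
case: adj_simple => sym _; rewrite inE; apply/existsP/idP => [[u' /existsP[v']] | adj_uv].
  by case/andP=> adj_uv' /eqP/set2_eqP [[-> ->] | [-> ->]]; rewrite // sym.
by exists u; apply/existsP; exists v; rewrite adj_uv eqxx.
Qed.

Lemma edge_label_set2 (l : V -> A) u v a :
  u != v -> edge_label l [set u; v] a = (l u + l v == a)%R.
Proof.
move=> neq_uv; apply/existsP/idP => [[u' /existsP[v']] | hl].
  by case/andP=> /andP[/eqP/set2_eqP [[-> ->] | [-> ->]] _] //; rewrite addrC.
by exists u; apply/existsP; exists v; rewrite eqxx neq_uv.
Qed.

End SimpleGraph.

Lemma ecount_ltn n (A : finZmodType) (adj : rel 'I_n) (l : 'I_n -> A) a :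
  simple_graph adj ->
  ecount adj l a =
  #|[set p : 'I_n * 'I_n | [&& p.1 < p.2, adj p.1 p.2 & (l p.1 + l p.2 == a)%R]]|.
Proof.
move=> adj_simple; case: (adj_simple) => sym irr; rewrite /ecount.
rewrite -(card_in_imset (f := fun p => [set p.1; p.2])); last first.
  by move=> [u v] [u' v']; rewrite !inE => /and3P[+ _ _] /and3P[+ _ _]; apply: set2_ltn_inj.
apply: eq_card => e; rewrite in_set; apply/andP/imsetP => [[] | ].
  rewrite inE => /existsP[u /existsP[v /andP[adj_uv /eqP->]]] hl.
  have neq_uv : u != v by apply: contraTneq adj_uv => ->; rewrite irr.
  rewrite edge_label_set2 // in hl.
  have [ltuv | ltvu | eq_uv] := ltngtP u v.
  - by exists (u, v); rewrite // inE /= ltuv adj_uv.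
  - exists (v, u); last by rewrite /= setUC.
    by rewrite inE /= ltvu sym adj_uv addrC.
  - by move: neq_uv; rewrite -val_eqE /= eq_uv eqxx.
case=> [[u v]]; rewrite inE /= => /and3P[ltuv adj_uv hl] -> /=.
have neq_uv : u != v by rewrite -val_eqE neq_ltn ltuv.
by rewrite set2_in_edges // edge_label_set2.
Qed.

Definition friendship_rel (u v : nat) : bool :=
  (u != v) && [|| u == 0, v == 0 | (0 < u) && (0 < v) && (u.-1./2 == v.-1./2)].

Lemma friendship_simple n : simple_graph (@friendship_adj n).
Proof.
split=> [u v | u]; last by rewrite /friendship_adj eqxx.
by rewrite /friendship_adj eq_sym orbCA [(0 < u) && _]andbC [_./2 == _]eq_sym.
Qed.

Lemma friendship_relS i v : i.+1 < v -> friendship_rel i.+1 v = (v == i.+2) && ~~ odd i.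
Proof.
by move=> ltiv; rewrite /friendship_rel -!divn2; have := modn2 i => ?; apply/idP/idP; lia.
Qed.

(* Vertex 0 is the centre; vertices 2i+1 and 2i+2 carry the entries of the
   i-th pair of s. *)
Definition friendship_label (A : zmodType) (s : seq (A * A)) (u : nat) : A :=
  if u is v.+1 then if odd v then (nth 0%R s v./2).2 else (nth 0%R s v./2).1 else 0%R.

Arguments friendship_label {A} s u : simpl never.

Section FriendshipLabel.
Context {A : zmodType} (s : seq (A * A)) (p : A * A).

Lemma friendship_label0 : friendship_label s 0 = 0%R. Proof. by []. Qed.
Lemma friendship_label_cons1 : friendship_label (p :: s) 1 = p.1. Proof. by []. Qed.
Lemma friendship_label_cons2 : friendship_label (p :: s) 2 = p.2. Proof. by []. Qed.

Lemma friendship_label_consS u : friendship_label (p :: s) u.+3 = friendship_label s u.+1.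
Proof. by rewrite /friendship_label /= negbK. Qed.

End FriendshipLabel.

Lemma count_friendship_label_outer (A : zmodType) (s : seq (A * A)) b :
  count (fun u => friendship_label s u.+1 == b) (iota 0 (2 * size s))
  = count (fun p : A * A => p.1 == b) s + count (fun p : A * A => p.2 == b) s.
Proof.
elim: s => // p s IH; rewrite mulnS add2n count_iota2.
under eq_count => u do rewrite (friendship_label_consS s p u).
by rewrite IH friendship_label_cons1 friendship_label_cons2 /=; lia.
Qed.

Lemma count_friendship_label_rims (A : zmodType) (s : seq (A * A)) b :
  count (fun u => ~~ odd u && (friendship_label s u.+1 + friendship_label s u.+2 == b)%R)
    (iota 0 (2 * size s))
  = count (fun p : A * A => p.1 + p.2 == b)%R s.
Proof.
elim: s => // p s IH; rewrite mulnS add2n count_iota2.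
under eq_count => u do
  rewrite !oddS negbK (friendship_label_consS s p u) (friendship_label_consS s p u.+1).
by rewrite IH friendship_label_cons1 friendship_label_cons2 /= addn0.
Qed.

Section FriendshipCounts.
Context {A : finZmodType} (s : seq (A * A)) (b : A).
Local Notation N := (2 * size s).
Local Notation f := (friendship_label s).

Lemma vcount_friendship_label :
  vcount (fun v : 'I_N.+1 => f v) b
  = (b == 0)%R + count (fun p : A * A => p.1 == b) s + count (fun p : A * A => p.2 == b) s.
Proof.
rewrite /vcount (card_ord_count _ (fun u => f u == b)) iota0S /= count_map.
by rewrite count_friendship_label_outer addnA [(0 == b)%R]eq_sym.
Qed.

Let Q u v := [&& u < v, friendship_rel u v & (f u + f v == b)%R].

Let count_spokes : count (Q 0) (iota 0 N.+1) = count (fun v => f v.+1 == b) (iota 0 N).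
Proof.
rewrite iota0S /= count_map; apply: eq_count => v.
by rewrite /Q /= friendship_label0 add0r.
Qed.

Let count_rim i : i < N -> count (Q i.+1) (iota 0 N.+1) = ~~ odd i && (f i.+1 + f i.+2 == b)%R.
Proof.
move=> ltiN; rewrite (eq_count (a2 := fun v =>
  (v == i.+2) && (~~ odd i && (f i.+1 + f i.+2 == b)%R))).
  rewrite count_iota_pred1 leq0n add0n; have [_ | even_i] := boolP (odd i).
    by rewrite andbF.
  suff -> : i.+2 < N.+1 by [].
  rewrite ltnS ltn_neqAle ltiN andbT; apply/eqP => eqiN.
  by move: (odd_double (size s)); rewrite -mul2n -eqiN /= even_i.
move=> v; rewrite /Q; have [ltiv | leiv] := ltnP i.+1 v.
  by rewrite /= friendship_relS //; case: eqP => [-> | _]; rewrite ?andbF.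
by rewrite /=; case: eqP leiv => // ->; rewrite ltnn.
Qed.

Lemma ecount_friendship_label :
  ecount (@friendship_adj (size s)) (fun v : 'I_N.+1 => f v) b
  = count (fun p : A * A => p.1 == b) s + count (fun p : A * A => p.2 == b) s
    + count (fun p : A * A => p.1 + p.2 == b)%R s.
Proof.
rewrite ecount_ltn; last exact: friendship_simple.
(* On ordinals, friendship_adj unfolds to friendship_rel on their values. *)
rewrite -[LHS]/#|[set p : 'I_N.+1 * 'I_N.+1 | Q p.1 p.2]|.
rewrite card_ord_pairs big_ord_recl count_spokes.
under eq_bigr => i _ do rewrite lift0 (count_rim _ (ltn_ord i)).
rewrite (sum_ord_count N (fun i => ~~ odd i && (f i.+1 + f i.+2 == b)%R)).
by rewrite count_friendship_label_rims count_friendship_label_outer.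
Qed.

End FriendshipCounts.

Section Construction.
Variables k t : nat.
Hypotheses (k_odd : odd k) (t_le_k : t <= k).
Local Notation m := (3 * k).

Definition retained x := (x %% 3 != 1) || (t <= x %/ 3).

Definition first_label x := if (t == k) && (x == 0) then m.-1 else x.
Definition second_label x := if x == m.-1 then (t != 0 : nat) else x.+1.

Definition retained_count (P : pred nat) := count (fun x => retained x && P x) (iota 0 m).

Let k_gt0 : 0 < k. Proof. by case: k k_odd. Qed.
Let m_gt1 : 1 < m. Proof. by have := k_gt0; lia. Qed.
Let m_odd : odd m. Proof. by rewrite oddM. Qed.

Lemma retained0 : retained 0. Proof. by rewrite /retained mod0n. Qed.
Lemma retained1 : retained 1 = (t == 0). Proof. by rewrite /retained /= leqn0. Qed.
Lemma retained_pred_m : retained m.-1. Proof. by rewrite /retained; lia. Qed.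
Lemma retained_pred2_m : retained m.-2 = (t != k).
Proof. by rewrite /retained; apply/idP/idP; lia. Qed.

Lemma retained_consecutive n : 0 < n -> (t == 0).+1 <= retained n + retained n.-1.
Proof. by rewrite /retained; lia. Qed.

Lemma retained_two_of_three n w : 0 < n -> n %% 3 = (2 * w + 1) %% 3 ->
  2 <= retained n + retained n.-1 + retained w.
Proof. by rewrite /retained; lia. Qed.

Lemma count_retained : count retained (iota 0 m) = m - t.
Proof.
suff count_prefix i : count retained (iota 0 (3 * i)) = 3 * i - minn i t.
  by rewrite count_prefix (minn_idPr t_le_k).
elim: i => [|i IH] //; rewrite mulnS addnC iotaD count_cat {}IH /= add0n addn0 /retained.
lia.
Qed.

Lemma retained_count_middle (P : pred nat) n :
  {in iota 1 (m - 2), forall x, P x = (x == n)} ->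
  count (fun x => retained x && P x) (iota 1 (m - 2)) = (0 < n < m.-1) && retained n.
Proof.
move=> hP; rewrite (eq_in_count (a2 := fun x => (x == n) && retained n)).
  by rewrite count_iota_pred1 (_ : 1 + (m - 2) = m.-1) //; lia.
by move=> x /hP ->; case: eqP => [-> | _]; rewrite ?andbT ?andbF.
Qed.

Lemma retained_count_first n : n < m ->
  retained_count (fun x => first_label x == n)
  = ((t != k) && (n == 0)) + ((0 < n < m.-1) && retained n) + (n == m.-1)
    + ((t == k) && (n == m.-1)).
Proof.
move=> ltnm; rewrite /retained_count count_iota_ends // (retained_count_middle _ n); last first.
  by move=> x; rewrite mem_iota /first_label => hx; rewrite (_ : x == 0 = false) ?andbF //; lia.
rewrite retained0 retained_pred_m /first_label /= andbT eq_sym (_ : m.-1 == 0 = false) ?andbF.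
  by case: (t == k); rewrite /=; lia.
by apply/eqP; lia.
Qed.

Lemma retained_count_second n : n < m ->
  retained_count (fun x => second_label x == n)
  = (n == 1) + ((1 < n) && retained n.-1) + (n == (t != 0)).
Proof.
move=> ltnm; rewrite /retained_count count_iota_ends // (retained_count_middle _ n.-1).
  rewrite retained0 retained_pred_m /second_label /= eqxx (_ : 0 == m.-1 = false); last by lia.
  rewrite (_ : (0 < n.-1 < m.-1) = (1 < n)); last by apply/idP/idP; lia.
  by rewrite ![_ == n]eq_sym.
by move=> x; rewrite mem_iota /second_label => hx; rewrite (_ : x == m.-1 = false); lia.
Qed.

Lemma retained_count_sum n w : n < m -> w < m -> (2 * w + 1 = n \/ 2 * w + 1 = n + m) ->
  retained_count (fun x => (first_label x + second_label x) %% m == n)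
  = (n == (t != k)) + ((0 < w < m.-1) && retained w)
    + ((t == 0) && (n == m.-1)) + ((t != 0) && (n == 0)).
Proof.
move=> ltnm ltwm hw; rewrite /retained_count count_iota_ends // (retained_count_middle _ w).
  have m_gt0 : 0 < m by lia.
  have [m0 mm] : (0 == m.-1) = false /\ (m.-1 == 0) = false by split; apply/eqP; lia.
  rewrite retained0 retained_pred_m /first_label /second_label /= !eqxx andbT m0 mm andbF.
  rewrite -[RHS]addnA; congr (_ + _ + _).
    by case: (t == k); rewrite /= eq_sym ?addn1 ?prednK ?modnn ?add0n ?modn_small.
  by case: (t == 0); rewrite /= ?addn0 ?addn1 ?prednK ?modnn ?modn_small ?add0n 1?eq_sym //; lia.
move=> x; rewrite mem_iota => hx.
have [x0 xm] : x != 0 /\ x != m.-1 by lia.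
rewrite /first_label /second_label (negbTE x0) (negbTE xm) andbF.
rewrite (_ : x + x.+1 = 2 * x + 1); last by lia.
by apply: modn_double_succ ltwm ltnm hw; lia.
Qed.

Lemma vertex_count_bounds n : n < m ->
  (t == 0).+1 <= (n == 0) + retained_count (fun x => first_label x == n)
                 + retained_count (fun x => second_label x == n) <= (t == 0).+2.
Proof.
move=> ltnm; rewrite (retained_count_first _ ltnm) (retained_count_second _ ltnm).
have [-> | n_gt0] := posnP n; first lia.
have [-> | n1] := eqVneq n 1; first by rewrite retained1 retained0; lia.
have [-> | nm] := eqVneq n m.-1; first by rewrite retained_pred2_m; lia.
by have := retained_consecutive _ n_gt0; lia.
Qed.

Lemma edge_count_bounds n : n < m ->
  2 <= retained_count (fun x => first_label x == n) + retained_count (fun x => second_label x == n)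
       + retained_count (fun x => (first_label x + second_label x) %% m == n) <= 3.
Proof.
move=> ltnm; have [w ltwm hw] := double_succ_surjective _ _ m_odd ltnm.
rewrite (retained_count_first _ ltnm) (retained_count_second _ ltnm).
rewrite (retained_count_sum _ _ ltnm ltwm hw).
have [en0 | n_gt0] := posnP n.
  by subst n; rewrite (_ : 0 < w < m.-1); [lia | apply/andP; split; lia].
have [en1 | n1] := eqVneq n 1; first by subst n; rewrite retained1 retained0; lia.
have [enm | nm] := eqVneq n m.-1; first by subst n; rewrite retained_pred2_m retained_pred_m; lia.
have /(retained_two_of_three _ _ n_gt0) : n %% 3 = (2 * w + 1) %% 3 by lia.
lia.
Qed.

Lemma first_label_lt x : x < m -> first_label x < m.
Proof. by rewrite /first_label; case: ifP; lia. Qed.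

Lemma second_label_lt x : x < m -> second_label x < m.
Proof. by rewrite /second_label; case: eqP => xm; [case: (t != 0) |]; lia. Qed.

Definition triangle_pairs : seq ('Z_m * 'Z_m) :=
  [seq (inZp (first_label x), inZp (second_label x)) | x <- iota 0 m & retained x].

Lemma size_triangle_pairs : size triangle_pairs = m - t.
Proof. by rewrite size_map size_filter count_retained. Qed.

Lemma count_triangle_pairs (P : pred ('Z_m * 'Z_m)) :
  count P triangle_pairs
  = count (fun x => retained x && P (inZp (first_label x), inZp (second_label x))) (iota 0 m).
Proof. by rewrite count_map count_filter; apply: eq_count => x; rewrite /= andbC. Qed.

Lemma count_triangle_first (b : 'Z_m) :
  count (fun p : 'Z_m * 'Z_m => p.1 == b) triangle_pairs
  = retained_count (fun x => first_label x == b).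
Proof.
rewrite count_triangle_pairs; apply: eq_in_count => x; rewrite mem_iota /= => ltxm.
by rewrite inZp_eq // first_label_lt.
Qed.

Lemma count_triangle_second (b : 'Z_m) :
  count (fun p : 'Z_m * 'Z_m => p.2 == b) triangle_pairs
  = retained_count (fun x => second_label x == b).
Proof.
rewrite count_triangle_pairs; apply: eq_in_count => x; rewrite mem_iota /= => ltxm.
by rewrite inZp_eq // second_label_lt.
Qed.

Lemma count_triangle_sum (b : 'Z_m) :
  count (fun p : 'Z_m * 'Z_m => p.1 + p.2 == b)%R triangle_pairs
  = retained_count (fun x => (first_label x + second_label x) %% m == b).
Proof. by rewrite count_triangle_pairs; apply: eq_count => x; rewrite /= inZpD_eq. Qed.

End Construction.

Theorem theorem12p2 (m : nat) (hodd : odd m) (h3 : (3 %| m)%N) (j : nat) :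
  (2 * m <= 3 * j)%N -> (j <= m)%N ->
  cordial ('Z_m : finZmodType) (@friendship_adj j).
Proof.
move=> h2m hjm.
have [k em] : exists k, m = 3 * k by case/dvdnP: h3 => k ->; exists k; rewrite mulnC.
subst m; have k_odd : odd k by move: hodd; rewrite oddM.
set t := 3 * k - j; have t_le_k : t <= k by lia.
have -> : j = size (triangle_pairs k t) by rewrite size_triangle_pairs; lia.
apply: (@cordial_of_count_bounds _ _ _
  (fun v : 'I_(2 * size (triangle_pairs k t)).+1 => friendship_label (triangle_pairs k t) v)
  (t == 0).+1 2) => b.
- rewrite vcount_friendship_label !(count_triangle_first, count_triangle_second) //.
  rewrite (_ : (b == 0)%R = (val b == 0)) //.
  by apply: vertex_count_bounds => //; apply: Zp_val_lt; lia.
- rewrite ecount_friendship_label.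
  rewrite !(count_triangle_first, count_triangle_second, count_triangle_sum) //.
  by apply: edge_count_bounds => //; apply: Zp_val_lt; lia.
Qed.
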